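(* Assume (A1)–(A4) below. Then $\alpha_t(\ell)\ge0$ for every compliance type $t\in\mathcal T$ and every instrument $\ell=1,\dots,L$.
   Context: We observe i.i.d. $(Y_i,D_i,\mathbf Z_i)$, $D_i\in\{0,1\}$, $\mathbf Z_i=(Z_{1i},\dots,Z_{Li})'\in\{0,1\}^L$, $L\ge2$. Units have potential outcomes $Y_i(0),Y_i(1)$ and a compliance type $D_i(\cdot):\{0,1\}^L\to\{0,1\}$ with $D_i=D_i(\mathbf Z_i)$; $\mathcal T$ is the set of types, $\theta_t=P(D_i(\cdot)=t)$, and $t(z_\ell,z_{-\ell})$ is type $t$'s treatment at the instrument vector with $\ell$-th coordinate $z_\ell$, others $z_{-\ell}$. $p_\ell=P(Z_{\ell i}=1)$, $\pi_\ell=\mathbb E[D_i\mid Z_{\ell i}=1]-\mathbb E[D_i\mid Z_{\ell i}=0]$, $\Sigma_Z=\mathrm{Var}(\mathbf Z_i)$, $q_\ell(z_{-\ell})=P(Z_{-\ell}=z_{-\ell}\mid Z_\ell=1)$, $q^0_\ell(z_{-\ell})=P(Z_{-\ell}=z_{-\ell}\mid Z_\ell=0)$, $\varphi_t(\ell)=\sum_{z_{-\ell}}[t(1,z_{-\ell})q_\ell(z_{-\ell})-t(0,z_{-\ell})q^0_\ell(z_{-\ell})]$, and $\alpha_t(\ell)=\theta_t\varphi_t(\ell)/\pi_\ell$. Assumptions: (A1) $(Y_i(0),Y_i(1),D_i(\cdot))$ independent of $\mathbf Z_i$. (A2) $D_i(z)$ nondecreasing in each coordinate for every $i$. (A3)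 $p_\ell>0$, $\pi_\ell>0$ for all $\ell$; $\Sigma_Z$ positive definite. (A4) Positive regression dependence: for each $\ell$, $\mathbb E[f(Z_{-\ell})\mid Z_\ell=1]\ge\mathbb E[f(Z_{-\ell})\mid Z_\ell=0]$ for every nondecreasing $f:\{0,1\}^{L-1}\to\mathbb R$. *)

From HB Require Import structures.
From mathcomp Require Import all_boot all_order all_algebra.
Set Implicit Arguments. Unset Strict Implicit. Unset Printing Implicit Defensive.
Import Order.TTheory GRing.Theory Num.Theory.
Local Open Scope ring_scope.

Section IV.
Variable L : nat.

Definition zvec := {ffun 'I_L -> bool}.
(* z_{-l} : the instrument vector with coordinate l removed *)
Definition zminus (l : 'I_L) := {ffun {j : 'I_L | j != l} -> bool}.
Definition ctype := {ffun zvec -> bool}.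

(* (z_l, z_{-l}) : the vector with l-th coordinate b and others zm *)
Definition zjoin (l : 'I_L) (b : bool) (zm : zminus l) : zvec :=
  [ffun j => match insub j with Some k => zm k | None => b end].

Definition zdrop (l : 'I_L) (z : zvec) : zminus l := [ffun k => z (val k)].

Variable R : realFieldType.
Definition b2R (b : bool) : R := (b : nat)%:R.

(* Pr : joint probability mass function of (D_i(.), Z_i) *)
Variable Pr : {ffun ctype * zvec -> R}.

Definition is_pmf := (forall x, 0 <= Pr x) /\ \sum_x Pr x = 1.

Definition theta (t : ctype) : R := \sum_(z : zvec) Pr (t, z).
Definition pZ (z : zvec) : R := \sum_(t : ctype) Pr (t, z).

Definition pl (l : 'I_L) : R := \sum_(z : zvec) b2R (z l) * pZ z.

(* pi_l = E[D | Z_l = 1] - E[D | Z_l = 0], with D = D(.)(Z) *)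
Definition ED_given (l : 'I_L) (b : bool) : R :=
  (\sum_(x : ctype * zvec) b2R (x.2 l == b) * b2R (x.1 x.2) * Pr x) /
  (\sum_(z : zvec) b2R (z l == b) * pZ z).
Definition pil (l : 'I_L) : R := ED_given l true - ED_given l false.

Definition EZ (j : 'I_L) : R := \sum_(z : zvec) b2R (z j) * pZ z.
Definition SigmaZ : 'M[R]_L :=
  \matrix_(j, k) (\sum_(z : zvec) b2R (z j) * b2R (z k) * pZ z - EZ j * EZ k).

Definition posdef (M : 'M[R]_L) :=
  forall v : 'rV[R]_L, v != 0 -> 0 < (v *m M *m v^T) 0 0.

Definition ql (l : 'I_L) (zm : zminus l) : R := pZ (zjoin true zm) / pl l.
Definition q0l (l : 'I_L) (zm : zminus l) : R := pZ (zjoin false zm) / (1 - pl l).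

Definition phi (t : ctype) (l : 'I_L) : R :=
  \sum_(zm : zminus l)
     (b2R (t (zjoin true zm)) * ql zm - b2R (t (zjoin false zm)) * q0l zm).
Definition alpha (t : ctype) (l : 'I_L) : R := theta t * phi t l / pil l.

(* (A1) (restricted to what the statement involves): D_i(.) independent of Z_i *)
Definition A1_indep := forall t z, Pr (t, z) = theta t * pZ z.

Definition mono_type (t : ctype) :=
  forall (l : 'I_L) (zm : zminus l), t (zjoin false zm) ==> t (zjoin true zm).
Definition A2_monotone := forall t, 0 < theta t -> mono_type t.

Definition A3_relevance :=
  (forall l, 0 < pl l) /\ (forall l, 0 < pil l) /\ posdef SigmaZ.

Definition nondecr_fun (l : 'I_L) (f : zminus l -> R) :=
  forall zm wm : zminus l, (forall k, zm k ==> wm k) -> f zm <= f wm.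
Definition A4_PRD :=
  forall (l : 'I_L) (f : zminus l -> R), nondecr_fun f ->
    \sum_(zm : zminus l) f zm * q0l zm <= \sum_(zm : zminus l) f zm * ql zm.

End IV.

(** Under monotonicity a type [t] is nondecreasing in the whole instrument
    vector, so [t(0, .)] is a nondecreasing function of [z_{-l}].  Hence
    [phi_t(l) >= E[t(0, Z_{-l}) | Z_l = 1] - E[t(0, Z_{-l}) | Z_l = 0]],
    by monotonicity in [z_l], and this difference is nonnegative by positive
    regression dependence.  With [theta_t >= 0] and [pi_l > 0] the sign of
    [alpha_t(l)] follows.  (A2) only constrains types of positive mass, but
    the others have [alpha_t(l) = 0]. *)
From HB Require Import structures.
From mathcomp Require Import all_boot all_order all_algebra.
Import Order.TTheory GRing.Theory Num.Theory.
Local Open Scope ring_scope.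

Lemma zjoin_dropE {L : nat} (l : 'I_L) (b : bool) (z : zvec L) (k : 'I_L) :
  zjoin b (zdrop l z) k = if k == l then b else z k.
Proof.
rewrite /zjoin ffunE; case: insubP => [u kl_neq val_u|].
  by rewrite ffunE val_u (negbTE kl_neq).
by rewrite negbK => ->.
Qed.

Lemma zjoin_drop {L : nat} (l : 'I_L) (z : zvec L) : zjoin (z l) (zdrop l z) = z.
Proof. by apply/ffunP => k; rewrite zjoin_dropE; case: eqP => [->|]. Qed.

Lemma zjoin_le {L : nat} (l : 'I_L) (b : bool) (zm wm : zminus l) :
  (forall k, zm k ==> wm k) -> forall k, zjoin b zm k ==> zjoin b wm k.
Proof.
move=> le_zw k; rewrite /zjoin !ffunE; case: insubP => [u _ _|_] //.
exact: implybb.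
Qed.

Lemma b2R_le (R : realFieldType) (a b : bool) : a ==> b -> b2R R a <= b2R R b.
Proof. by case: a; case: b => //= _; rewrite /b2R ler01. Qed.

Section MonotoneType.
Context {L : nat} {t : ctype L}.
Hypothesis t_mono : mono_type t.

Lemma mono_type_raise (j : 'I_L) (z : zvec L) : t z ==> t (zjoin true (zdrop j z)).
Proof.
have := t_mono j (zdrop j z); rewrite -[in t z](zjoin_drop j z).
by case: (z j) => // _; apply: implybb.
Qed.

Lemma mono_type_le (z w : zvec L) : (forall k, z k ==> w k) -> t z ==> t w.
Proof.
move Hn : #|[pred j | z j != w j]| => n; elim: n z Hn => [|n IHn] z Hn le_zw.
  suff -> : z = w by apply: implybb.
  apply/ffunP => k; apply/eqP; apply: contraT => zw_neq.
  by move/card0_eq/(_ k): Hn; rewrite inE zw_neq.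
have /card_gt0P [j] : (0 < #|[pred j | z j != w j]|)%N by rewrite Hn.
rewrite inE => zw_neq; have [zj wj] : z j = false /\ w j = true.
  by move: (le_zw j) zw_neq; case: (z j); case: (w j).
set z' := zjoin true (zdrop j z).
have diff_z' : [pred k | z' k != w k] =i [predD1 [pred k | z k != w k] & j].
  by move=> k; rewrite !inE /z' zjoin_dropE; case: (eqVneq k j) => [->|]; rewrite ?wj.
have z'_le : t z' ==> t w.
  apply: IHn.
    apply: succn_inj.
    by rewrite -Hn (cardD1 j [pred k | z k != w k]) inE zw_neq (eq_card diff_z').
  by move=> k; rewrite /z' zjoin_dropE; case: eqP => [->|]; rewrite ?wj ?implybT.
by move: (mono_type_raise j z) z'_le; case: (t z); case: (t z'); case: (t w).
Qed.

Lemma nondecr_zjoin (R : realFieldType) (l : 'I_L) (b : bool) :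
  nondecr_fun (fun zm : zminus l => b2R R (t (zjoin b zm))).
Proof. by move=> zm wm le_zw; apply/b2R_le/mono_type_le/zjoin_le. Qed.

End MonotoneType.

Section Phi.
Context {L : nat} {R : realFieldType} {Pr : {ffun ctype L * zvec L -> R}}.
Hypothesis Pr_ge0 : forall x, 0 <= Pr x.

Lemma pZ_ge0 (z : zvec L) : 0 <= pZ Pr z.
Proof. exact: sumr_ge0. Qed.

Lemma theta_ge0 (t : ctype L) : 0 <= theta Pr t.
Proof. exact: sumr_ge0. Qed.

Lemma ql_ge0 (l : 'I_L) (zm : zminus l) : 0 < pl Pr l -> 0 <= ql Pr zm.
Proof. by move=> pl_gt0; rewrite divr_ge0 ?pZ_ge0 ?ltW. Qed.

Lemma phi_ge0 (t : ctype L) (l : 'I_L) :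
  0 < pl Pr l -> A4_PRD Pr -> mono_type t -> 0 <= phi Pr t l.
Proof.
move=> pl_gt0 prd t_mono; rewrite /phi sumrB subr_ge0.
apply: le_trans (prd l _ (nondecr_zjoin t_mono R l false)) _.
apply: ler_sum => zm _; rewrite ler_wpM2r ?ql_ge0 //.
exact/b2R_le/t_mono.
Qed.

End Phi.

Theorem proposition2 (L : nat) (R : realFieldType)
  (Pr : {ffun ctype L * zvec L -> R}) :
  (2 <= L)%N ->
  is_pmf Pr ->
  A1_indep Pr ->
  A2_monotone Pr ->
  A3_relevance Pr ->
  A4_PRD Pr ->
  forall (t : ctype L) (l : 'I_L), 0 <= alpha Pr t l.
Proof.
move=> _ [Pr_ge0 _] _ monotone [pl_gt0 [pil_gt0 _]] prd t l.
apply: divr_ge0; last exact: ltW.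
have [->|theta_neq0] := eqVneq (theta Pr t) 0; first by rewrite mul0r.
have t_mono : mono_type t.
  by apply: monotone; rewrite lt_def theta_neq0 (theta_ge0 Pr_ge0).
by rewrite mulr_ge0 ?(theta_ge0 Pr_ge0) ?(phi_ge0 Pr_ge0).
Qed.
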